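(* Let $R$ be an associative ring and $S=\begin{pmatrix}A&B\\ C&D\end{pmatrix}$ a non-commuting switch over $R$. Let $P=A^{-1}B^{-1}A$ and $Q=B^{-1}(1-A)$. For $n\ge2$ and $1\le i\le n-1$ let $S_i=I_{i-1}\oplus S\oplus I_{n-i-1}$ be the $n\times n$ block-diagonal matrix. Then $$(P^{n-1},\ldots,P,1)\,S_i=(P^{n-1},\ldots,P,1)\quad\text{and}\quad S_i\,(1,Q,\ldots,Q^{n-1})^T=(1,Q,\ldots,Q^{n-1})^T.$$
   Context: A non-commuting switch over $R$ is $S=\begin{pmatrix}A&B\\ C&D\end{pmatrix}$ where $A$, $A-1$, $B$ are invertible elements of $R$ that do not commute and satisfy the fundamental equation $A^{-1}B^{-1}AB-BA^{-1}B^{-1}A=B^{-1}AB-A$, and $C=A^{-1}B^{-1}A(1-A)$, $D=1-A^{-1}B^{-1}AB$. *)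

From HB Require Import structures.
From mathcomp Require Import all_boot all_order all_algebra.
Set Implicit Arguments. Unset Strict Implicit. Unset Printing Implicit Defensive.
Import GRing.Theory.
Local Open Scope ring_scope.

Definition noncomm_switch (R : unitRingType) (A B : R) : Prop :=
  [/\ A \is a GRing.unit, (A - 1) \is a GRing.unit, B \is a GRing.unit,
      A * B != B * A &
      A^-1 * B^-1 * A * B - B * A^-1 * B^-1 * A = B^-1 * A * B - A].

Definition switchC (R : unitRingType) (A B : R) : R := A^-1 * B^-1 * A * (1 - A).
Definition switchD (R : unitRingType) (A B : R) : R := 1 - A^-1 * B^-1 * A * B.

(* S_i = I_{i-1} (+) S (+) I_{n-i-1}, an n x n matrix over R (1 <= i <= n-1):
   S occupies (1-indexed) rows/columns i, i+1, i.e. 0-indexed positions i-1, i. *)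
Definition switch_mx (R : unitRingType) (A B : R) (n i : nat) : 'M[R]_n :=
  \matrix_(j < n, k < n)
    if (j == i.-1 :> nat) && (k == i.-1 :> nat) then A
    else if (j == i.-1 :> nat) && (k == i :> nat) then B
    else if (j == i :> nat) && (k == i.-1 :> nat) then switchC A B
    else if (j == i :> nat) && (k == i :> nat) then switchD A B
    else (j == k)%:R.

From mathcomp Require Import all_boot all_order all_algebra.
From mathcomp Require Import zify.

Set Implicit Arguments.
Unset Strict Implicit.
Unset Printing Implicit Defensive.
Import GRing.Theory.
Local Open Scope ring_scope.

(* S_i acts only on the coordinates i, i+1, where it is the 2x2 switch S.
   So it suffices that (P, 1) S = (P, 1) and S (1, Q)^T = (1, Q)^T; multiplying
   by P^m on the left (resp. Q^m on the right) moves these pairs to any two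
   consecutive positions of the power vectors. *)

Section MulmxSupport.

Variables (R : pzRingType) (m n p : nat).

Lemma mulmx_col_supp2 (v : 'M[R]_(m, n)) (M : 'M[R]_(n, p)) i a b k :
  a != b -> (forall j, j != a -> j != b -> M j k = 0) ->
  (v *m M) i k = v i a * M a k + v i b * M b k.
Proof.
move=> neq_ab M0; rewrite mxE (bigD1 a) //= (bigD1 b) 1?eq_sym //=.
by rewrite big1 ?addr0 // => j /andP[/M0 Mj0 /Mj0 ->]; rewrite mulr0.
Qed.

Lemma mulmx_row_supp2 (M : 'M[R]_(m, n)) (w : 'M[R]_(n, p)) i a b k :
  a != b -> (forall j, j != a -> j != b -> M i j = 0) ->
  (M *m w) i k = M i a * w a k + M i b * w b k.
Proof.
move=> neq_ab M0; rewrite mxE (bigD1 a) //= (bigD1 b) 1?eq_sym //=.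
by rewrite big1 ?addr0 // => j /andP[/M0 Mj0 /Mj0 ->]; rewrite mul0r.
Qed.

End MulmxSupport.

Definition switchP (R : unitRingType) (A B : R) : R := A^-1 * B^-1 * A.
Definition switchQ (R : unitRingType) (A B : R) : R := B^-1 * (1 - A).

Section SwitchFixedVectors.

Variables (R : unitRingType) (A B : R).

Lemma switch_left_fix1 : switchP A B * A + switchC A B = switchP A B.
Proof. by rewrite /switchC -/(switchP A B) mulrBr mulr1 addrC subrK. Qed.

Lemma switch_left_fix2 : switchP A B * B + switchD A B = 1.
Proof. by rewrite /switchD -/(switchP A B) addrC subrK. Qed.

Hypothesis B_unit : B \is a GRing.unit.

Lemma mulr_switchQ : B * switchQ A B = 1 - A.
Proof. by rewrite /switchQ mulrA divrr // mul1r. Qed.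

Lemma switch_right_fix1 : A + B * switchQ A B = 1.
Proof. by rewrite mulr_switchQ addrC subrK. Qed.

Lemma switch_right_fix2 : switchC A B + switchD A B * switchQ A B = switchQ A B.
Proof.
rewrite /switchD /switchC -/(switchP A B) mulrBl mul1r -(mulrA _ B) mulr_switchQ.
by rewrite addrC subrK.
Qed.

End SwitchFixedVectors.

Section SwitchMatrix.

Variables (R : unitRingType) (A B : R) (n : nat) (ia ib : 'I_n).
Hypothesis ib_succ : val ib = (val ia).+1.

Let S := switch_mx A B n ib.

Lemma neq_switch_idx : ia != ib.
Proof. by rewrite -val_eqE ib_succ /= neq_ltn ltnSn. Qed.

Lemma switch_mxE j k :
  S j k =
  if j == ia then (if k == ia then A else if k == ib then B else 0)
  else if j == ib then (if k == ia then switchC A B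
                        else if k == ib then switchD A B else 0)
  else (j == k)%:R.
Proof.
rewrite /S /switch_mx mxE.
have -> : (ib : nat).-1 = ia by rewrite ib_succ.
have ab := negbTE neq_switch_idx; have ba : (ib == ia) = false by rewrite eq_sym.
rewrite !val_eqE.
case: (j =P ia) => [->|_]; [|case: (j =P ib) => [->|_]];
  (case: (k =P ia) => [->|/eqP kia]; [|case: (k =P ib) => [->|/eqP kib]]);
  rewrite ?eqxx ?ab ?ba ?andbF ?andbT //=.
all: by rewrite eq_sym ?(negbTE kia) ?(negbTE kib).
Qed.

Lemma row_mul_switch_mx (v : 'rV[R]_n) k :
  (v *m S) 0 k =
  if k == ia then v 0 ia * A + v 0 ib * switchC A B
  else if k == ib then v 0 ia * B + v 0 ib * switchD A B
  else v 0 k.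
Proof.
have ab := neq_switch_idx; have ba : (ib == ia) = false by rewrite eq_sym (negbTE ab).
case: (k =P ia) => [->|/eqP/negbTE kia]; [|case: (k =P ib) => [->|/eqP/negbTE kib]].
- rewrite (mulmx_col_supp2 _ _ ab) => [|j /negbTE ja /negbTE jb].
    by rewrite !switch_mxE !eqxx ba.
  by rewrite switch_mxE ja jb.
- rewrite (mulmx_col_supp2 _ _ ab) => [|j /negbTE ja /negbTE jb].
    by rewrite !switch_mxE !eqxx ba.
  by rewrite switch_mxE ja jb.
rewrite -[in RHS](mulmx1 v) !mxE; apply: eq_bigr => j _.
rewrite switch_mxE mxE kia kib.
by case: (j =P ia) => [->|_]; [|case: (j =P ib) => [->|_]]; rewrite // eq_sym ?kia ?kib.
Qed.

Lemma switch_mx_mul_col (w : 'cV[R]_n) k :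
  (S *m w) k 0 =
  if k == ia then A * w ia 0 + B * w ib 0
  else if k == ib then switchC A B * w ia 0 + switchD A B * w ib 0
  else w k 0.
Proof.
have ab := neq_switch_idx; have ba : (ib == ia) = false by rewrite eq_sym (negbTE ab).
case: (k =P ia) => [->|/eqP/negbTE kia]; [|case: (k =P ib) => [->|/eqP/negbTE kib]].
- rewrite (mulmx_row_supp2 _ _ ab) => [|j /negbTE ja /negbTE jb].
    by rewrite !switch_mxE !eqxx ba.
  by rewrite switch_mxE !eqxx ja jb.
- rewrite (mulmx_row_supp2 _ _ ab) => [|j /negbTE ja /negbTE jb].
    by rewrite !switch_mxE !eqxx ba.
  by rewrite switch_mxE !eqxx ba ja jb.
rewrite -[in RHS](mul1mx w) !mxE; apply: eq_bigr => j _.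
by rewrite switch_mxE mxE kia kib.
Qed.

End SwitchMatrix.

Theorem lemma9p2 (R : unitRingType) (A B : R) (n i : nat) :
  noncomm_switch A B -> (2 <= n)%N -> (1 <= i)%N -> (i <= n - 1)%N ->
  let P := A^-1 * B^-1 * A in
  let Q := B^-1 * (1 - A) in
  (\row_(j < n) P ^+ (n - 1 - j)) *m switch_mx A B n i = \row_(j < n) P ^+ (n - 1 - j)
  /\ switch_mx A B n i *m (\col_(j < n) Q ^+ j) = \col_(j < n) Q ^+ j.
Proof.
case=> _ _ B_unit _ _ n_ge2; case: i => [//|a] _ a_lt P Q.
have ia_lt : (a < n)%N by move: a_lt n_ge2; lia.
have ib_lt : (a.+1 < n)%N by move: a_lt n_ge2; lia.
pose ia : 'I_n := Ordinal ia_lt; pose ib : 'I_n := Ordinal ib_lt.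
have ib_succ : val ib = (val ia).+1 by [].
change (switch_mx A B n a.+1) with (switch_mx A B n ib).
split.
- have exp_ia : (n - 1 - ia = (n - 1 - ib).+1)%N by rewrite /=; move: a_lt; lia.
  apply/rowP => k; rewrite (row_mul_switch_mx _ _ ib_succ) !mxE.
  case: ifP => [/eqP->|_]; first by rewrite exp_ia exprSr -mulrA -mulrDr switch_left_fix1.
  case: ifP => [/eqP->|_] //.
  by rewrite exp_ia exprSr -mulrA -mulrDr switch_left_fix2 mulr1.
- apply/colP => k; rewrite (switch_mx_mul_col _ _ ib_succ) !mxE /= exprS.
  case: ifP => [/eqP->|_]; first by rewrite mulrA -mulrDl switch_right_fix1 // mul1r.
  case: ifP => [/eqP->|_] //.
  by rewrite mulrA -mulrDl switch_right_fix2 // -exprS.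
Qed.
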